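(* Let $(B,\lfloor\cdot,\cdot\rfloor)$ be an SSD space with quadratic form $q$, and let $A\subset B$ be a $q$-positive set. If $A$ is contained in more than one maximally $q$-positive set, then the family of maximally $q$-positive sets containing $A$ has at least the cardinality of the continuum.
   Context: An SSD space is a pair $(B,\lfloor\cdot,\cdot\rfloor)$ with $B$ a nonzero real vector space and $\lfloor\cdot,\cdot\rfloor$ a symmetric bilinear form on $B$; $q(b)=\frac12\lfloor b,b\rfloor$. A nonempty $A\subset B$ is $q$-positive if $q(b-c)\ge0$ for all $b,c\in A$; it is maximally $q$-positive if it is $q$-positive and not properly contained in another $q$-positive set. *)

From HB Require Import structures.
From mathcomp Require Import all_boot all_order all_algebra.
From mathcomp Require Import boolp classical_sets Rstruct.
Set Implicit Arguments. Unset Strict Implicit. Unset Printing Implicit Defensive.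
Import Order.TTheory GRing.Theory Num.Theory.
Local Open Scope ring_scope.
Local Open Scope classical_set_scope.

Notation realR := Rdefinitions.R.

Definition SSD_space (B : lmodType realR) (bf : B -> B -> realR) : Prop :=
  [/\ exists b : B, b != 0,
      (forall b c : B, bf b c = bf c b) &
      (forall (a : realR) (b c d : B), bf (a *: b + c) d = a * bf b d + bf c d)].

Definition qform (B : lmodType realR) (bf : B -> B -> realR) (b : B) : realR :=
  bf b b / 2.

Definition q_positive (B : lmodType realR) (bf : B -> B -> realR) (A : set B) : Prop :=
  A !=set0 /\ (forall b c, A b -> A c -> 0 <= qform bf (b - c)).

Definition max_q_positive (B : lmodType realR) (bf : B -> B -> realR) (A : set B) : Prop :=
  q_positive bf A /\ (forall A', q_positive bf A' -> A `<=` A' -> A' = A).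

From HB Require Import structures.
From mathcomp Require Import all_boot all_order all_algebra.
From mathcomp Require Import boolp classical_sets Rstruct.
From mathcomp Require Import ring lra.
Set Implicit Arguments. Unset Strict Implicit. Unset Printing Implicit Defensive.
Import Order.TTheory GRing.Theory Num.Theory.
Local Open Scope ring_scope.
Local Open Scope classical_set_scope.

(* Two distinct maximally q-positive supersets M1, M2 of A contain points
   b1, b2 with q(b1 - b2) < 0.  Since q is a quadratic form,
   q((1-l)u + l v) = (1-l) q(u) + l q(v) - l(1-l) q(u - v), so every point
   c_l = b2 + l (b1 - b2), 0 <= l <= 1, keeps q(c_l - a) >= 0 for a in A, and
   A + {c_l} extends (Zorn) to a maximally q-positive set M_l.  For l <> l'
   the points c_l, c_l' satisfy q(c_l - c_l') = (l - l')^2 q(b1 - b2) < 0, so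
   they cannot lie in a common q-positive set and l |-> M_l is injective. *)

Lemma q_positive_maximal_extension (B : lmodType realR) (bf : B -> B -> realR)
    (A : set B) :
  q_positive bf A -> exists M, max_q_positive bf M /\ A `<=` M.
Proof.
move=> [A0 Apos].
pose P X := forall b c, (A `|` X) b -> (A `|` X) c -> 0 <= qform bf (b - c).
have [|X [PX Xmax]] := @Zorn_bigcup B P.
  move=> F FP Ftot b c [Ab|[Xb FXb Xbb]] [Ac|[Xc FXc Xcc]].
  - exact: Apos.
  - by apply: (FP _ FXc); [left|right].
  - by apply: (FP _ FXb); [right|left].
  - have [XY|YX] := Ftot _ _ FXb FXc.
    + by apply: (FP _ FXc); right => //; apply: XY.
    + by apply: (FP _ FXb); right => //; apply: YX.
exists (A `|` X); split; last by move=> x Ax; left.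
split; first by split => //; apply: subset_nonempty A0 => x; left.
move=> M [_ Mpos] AXM.
have AM : A `<=` M by move=> x Ax; apply: AXM; left.
have [MX|MnX] := pselect (M `<=` X).
  by apply/seteqP; split => [x Mx|//]; right; apply: MX.
exfalso; apply: (Xmax M).
  by split=> [x Xx|XM]; [apply: AXM; right | exact: MnX].
by move=> b c [/AM|] Mb [/AM|] Mc; apply: Mpos.
Qed.

Section QuadraticForm.
Variables (B : lmodType realR) (bf : B -> B -> realR).
Hypothesis bfC : forall b c : B, bf b c = bf c b.
Hypothesis bf_linear :
  forall (a : realR) (b c d : B), bf (a *: b + c) d = a * bf b d + bf c d.
Local Notation q := (qform bf).

Lemma bf0l d : bf 0 d = 0.
Proof. by have := bf_linear 1 0 0 d; rewrite scaler0 addr0 mul1r => h; lra. Qed.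

Lemma bfDl b c d : bf (b + c) d = bf b d + bf c d.
Proof. by have := bf_linear 1 b c d; rewrite scale1r mul1r. Qed.

Lemma bfZl a b d : bf (a *: b) d = a * bf b d.
Proof. by have := bf_linear a b 0 d; rewrite addr0 bf0l addr0. Qed.

Lemma bfDr b c d : bf d (b + c) = bf d b + bf d c.
Proof. by rewrite bfC bfDl (bfC b) (bfC c). Qed.

Lemma bfZr a b d : bf d (a *: b) = a * bf d b.
Proof. by rewrite bfC bfZl (bfC b). Qed.

Lemma qform0 : q 0 = 0.
Proof. by rewrite /qform bf0l mul0r. Qed.

Lemma qformZ a x : q (a *: x) = a ^+ 2 * q x.
Proof. by rewrite /qform bfZl bfZr; ring. Qed.

Lemma qformN x : q (- x) = q x.
Proof. by rewrite -scaleN1r qformZ sqrrN expr1n mul1r. Qed.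

Lemma qform_subC x y : q (x - y) = q (y - x).
Proof. by rewrite -opprB qformN. Qed.

Lemma qformZ_ge0 a d : q d < 0 -> 0 <= q (a *: d) -> a = 0.
Proof.
rewrite qformZ => neg ge0; apply/eqP; rewrite -sqrf_eq0 eq_le sqr_ge0 andbT.
by rewrite -(ler_nM2r neg) mul0r.
Qed.

Lemma qform_convex l u v :
  q (u + l *: (v - u)) = (1 - l) * q u + l * q v - l * (1 - l) * q (v - u).
Proof.
have -> : v = u + 1 *: (v - u) by rewrite scale1r addrC subrK.
rewrite [u + 1 *: _ - u]addrC addKr /qform.
rewrite !(bfDl, bfDr, bfZl, bfZr) (bfC _ u); ring.
Qed.

Definition q_compatible (A : set B) (c : B) := forall a, A a -> 0 <= q (c - a).

Lemma q_positive_compatible (A M : set B) b :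
  q_positive bf M -> A `<=` M -> M b -> q_compatible A b.
Proof. by move=> [_ Mpos] AM Mb a Aa; apply: Mpos => //; apply: AM. Qed.

Lemma q_compatible_segment (A : set B) b1 b2 l :
  q_compatible A b1 -> q_compatible A b2 -> q (b1 - b2) <= 0 -> 0 <= l <= 1 ->
  q_compatible A (b2 + l *: (b1 - b2)).
Proof.
move=> Ab1 Ab2 neg /andP[l0 l1] a Aa.
have -> : b2 + l *: (b1 - b2) - a = (b2 - a) + l *: ((b1 - a) - (b2 - a)).
  by rewrite opprB addrA subrK addrAC.
rewrite qform_convex opprB addrA subrK.
have := Ab1 a Aa; have := Ab2 a Aa => q2 q1.
have : 0 <= l * (1 - l) * - q (b1 - b2) by rewrite !mulr_ge0 //; lra.
nra.
Qed.

Lemma q_positive_setU1 (A : set B) c :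
  q_positive bf A -> q_compatible A c -> q_positive bf (A `|` [set c]).
Proof.
move=> [_ Apos] Ac; split; first by exists c; right.
move=> x y [Ax|->] [Ay|->]; rewrite ?subrr ?qform0 //.
- exact: Apos.
- by rewrite qform_subC; apply: Ac.
- exact: Ac.
Qed.

Lemma max_q_positive_incompatible (M : set B) b :
  max_q_positive bf M -> ~ M b -> exists2 m, M m & q (m - b) < 0.
Proof.
move=> [Mpos Mmax] Mnb; apply: contrapT => noneg; apply: Mnb.
have Mb : q_compatible M b.
  move=> m Mm; rewrite qform_subC leNgt; apply/negP => neg.
  by apply: noneg; exists m.
have <- := Mmax _ (q_positive_setU1 Mpos Mb) (fun x Mx => or_introl Mx).
by right.
Qed.

Lemma max_q_positive_neq (M1 M2 : set B) :
  max_q_positive bf M1 -> max_q_positive bf M2 -> M1 <> M2 ->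
  exists b1 b2, [/\ M1 b1, M2 b2 & q (b1 - b2) < 0].
Proof.
move=> max1 max2 M12.
have [M21|] := pselect (M2 `<=` M1); last first.
  move=> /existsNP[b2 /not_implyP[M2b2 M1nb2]].
  have [b1 M1b1 neg] := max_q_positive_incompatible max1 M1nb2.
  by exists b1, b2.
have /existsNP[b1 /not_implyP[M1b1 M2nb1]] : ~ M1 `<=` M2.
  by move=> M12'; apply: M12; apply/seteqP.
have [b2 M2b2 neg] := max_q_positive_incompatible max2 M2nb1.
by exists b1, b2; rewrite qform_subC.
Qed.

End QuadraticForm.

Definition squash (t : realR) : realR := (1 + t / (1 + `|t|)) / 2.

Lemma squash_itv t : 0 <= squash t <= 1.
Proof.
have hp : 0 < 1 + `|t| by rewrite ltr_wpDr.
have := ler_norm t; have := ler_norm (- t); rewrite normrN => ht htN.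
have h1 : t / (1 + `|t|) <= 1 by rewrite ler_pdivrMr // mul1r; lra.
have h2 : -1 <= t / (1 + `|t|) by rewrite ler_pdivlMr // mulN1r; lra.
by apply/andP; rewrite /squash; split; lra.
Qed.

Lemma squash_inj : injective squash.
Proof.
move=> s t; rewrite /squash => e.
have hs : 1 + `|s| != 0 by rewrite gt_eqF // ltr_wpDr.
have ht : 1 + `|t| != 0 by rewrite gt_eqF // ltr_wpDr.
have e2 : s / (1 + `|s|) = t / (1 + `|t|) by lra.
have e3 : s * (1 + `|t|) = t * (1 + `|s|).
  by rewrite -[s in LHS](divfK hs) -[t in RHS](divfK ht) e2; ring.
case: (lerP 0 s) => s0; case: (lerP 0 t) => t0;
  rewrite ?(ger0_norm s0) ?(ger0_norm t0) ?(ltr0_norm s0) ?(ltr0_norm t0) in e3;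
  nra.
Qed.

Theorem mainTheorem2 (B : lmodType realR) (bf : B -> B -> realR) (A : set B) :
  SSD_space bf -> q_positive bf A ->
  (exists M1 M2 : set B, [/\ max_q_positive bf M1, max_q_positive bf M2,
                             A `<=` M1, A `<=` M2 & M1 <> M2]) ->
  exists F : realR -> set B,
    injective F /\ (forall t, max_q_positive bf (F t) /\ A `<=` F t).
Proof.
move=> [_ bfC bf_linear] Apos [M1 [M2 [max1 max2 AM1 AM2 M12]]].
have [b1 [b2 [M1b1 M2b2 neg]]] := max_q_positive_neq bfC bf_linear max1 max2 M12.
pose c t := b2 + squash t *: (b1 - b2).
have Ac t : q_positive bf (A `|` [set c t]).
  apply: q_positive_setU1 => //; apply: q_compatible_segment => //.
  - exact: q_positive_compatible max1.1 AM1 M1b1.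
  - exact: q_positive_compatible max2.1 AM2 M2b2.
  - exact: ltW.
  - exact: squash_itv.
have [F HF] := choice (fun t => q_positive_maximal_extension (Ac t)).
exists F; split=> [s t Fst|t]; last first.
  by split; [exact: (HF t).1 | move=> x Ax; apply: (HF t).2; left].
have [[[_ Fpos] _] cFs] := HF s; have [_ cFt] := HF t.
apply: squash_inj; apply/eqP; rewrite -subr_eq0; apply/eqP.
apply: (qformZ_ge0 bfC bf_linear neg).
have <- : c s - c t = (squash s - squash t) *: (b1 - b2).
  by rewrite /c scalerBl opprD addrACA subrr add0r.
by apply: Fpos; [apply: cFs; right | rewrite Fst; apply: cFt; right].
Qed.
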